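(* Let $k\ge3$ be odd and $\ell\ge5$ be odd. There exists $m_0=m_0(k,\ell)$ such that for every $m\ge m_0$ the graph $H_m$ is $(C_k,C_\ell)$-Ramsey.
   Context: $H_m$ is the graph on pairwise disjoint vertex sets $V_1,\dots,V_5$, each of size $m$, whose edges are: a perfect matching between $V_1$ and $V_2$, a perfect matching between $V_3$ and $V_4$, and all possible edges between $V_i$ and $V_j$ for every other pair $\{i,j\}$ of distinct indices (there are no edges inside any $V_i$). A graph $G$ is $(H_1,H_2)$-Ramsey if every red/blue colouring of its edges contains a red copy of $H_1$ or a blue copy of $H_2$. $C_m$ is the cycle of length $m$. *)

From mathcomp Require Import all_boot.
Set Implicit Arguments. Unset Strict Implicit. Unset Printing Implicit Defensive.

Definition has_cycle (T : finType) (E : rel T) (k : nat) : Prop :=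
  exists f : 'I_k -> T, injective f /\ forall i : 'I_k, E (f i) (f (ordS i)).

(* Red/blue edge colourings are symmetric functions c : T -> T -> bool
   (c x y = true means the edge xy is red).  G is (C_k, C_l)-Ramsey if every
   colouring has a red C_k or a blue C_l. *)
Definition cycle_ramsey (T : finType) (G : rel T) (k l : nat) : Prop :=
  forall c : T -> T -> bool, (forall x y, c x y = c y x) ->
    has_cycle (fun x y => G x y && c x y) k \/
    has_cycle (fun x y => G x y && ~~ c x y) l.

(* Parts V_1..V_5 are indexed 0..4; vertex (i, a) is the a-th vertex of V_(i+1).
   Matched pairs: {V_1,V_2} = {0,1} and {V_3,V_4} = {2,3}. *)
Definition matched_pair (i j : nat) : bool :=
  ((minn i j == 0) && (maxn i j == 1)) || ((minn i j == 2) && (maxn i j == 3)).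

Definition Hm_adj (m : nat) : rel ('I_5 * 'I_m) :=
  fun x y =>
    if x.1 == y.1 then false
    else if matched_pair x.1 y.1 then x.2 == y.2
    else true.

From mathcomp Require Import all_boot zify.
Set Implicit Arguments. Unset Strict Implicit. Unset Printing Implicit Defensive.

(* View H_m as five parts of m columns.  Ramsey's theorem for pairs of columns, coloured by
   their [profile], yields n columns on which the colouring is canonical: an edge between
   parts i and j has colour X i j inside a column, and F i j from an earlier column of part i
   to a later column of part j.  A DPLL computation certifies that every canonical colouring
   has a monochromatic closed walk on three levels of columns, red of length 3 or blue of
   length 3 or 5, whose closing edge rises a level between two unmatched parts i and h.  Once
   the levels are spread apart, that edge can be replaced by a zigzag between parts i and h
   through the gap below the upper level, of any even extra length: this gives a red C_k or a
   blue C_l. *)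

Lemma eq_has_cycle (T : finType) (E E' : rel T) k :
  E =2 E' -> has_cycle E k -> has_cycle E' k.
Proof. by move=> eE [f [f_inj f_cyc]]; exists f; split=> // i; rewrite -eE. Qed.

Lemma has_cycle_seq (T : finType) (E : rel T) (s : seq T) :
  uniq s -> cycle E s -> has_cycle E (size s).
Proof.
case: s => [_ _|x s Us].
  by exists (fun i : 'I_0 => False_rect _ (notF (ltn_ord i))); split=> -[].
rewrite /= => /(pathP x) Es.
exists (fun i : 'I_(size s).+1 => nth x (x :: s) i); split.
  by move=> i j /eqP; rewrite nth_uniq // => /eqP/val_inj.
move=> i; have := Es i; rewrite size_rcons => /(_ (ltn_ord i)).
rewrite -rcons_cons !nth_rcons /= ltn_ord if_same.
have [lt_is|ge_is] := ltnP i (size s); first by rewrite modn_small.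
have -> : nat_of_ord i = size s by apply/eqP; rewrite eqn_leq ge_is andbT -ltnS.
by rewrite modnn.
Qed.

Section Ramsey.
Variable C : finType.

Lemma pigeonhole (T : Type) (c0 : C) (f : T -> C) (s : seq T) N :
  #|C| * N <= size s -> exists col, N <= count (fun y => f y == col) s.
Proof.
case: N => [|N] le_s; first by exists c0.
have [col|small] := pickP (fun col => N < count (fun y => f y == col) s).
  by exists col.
have : size s <= #|C| * N.
  rewrite -sum1_size (partition_big f predT) // -sum_nat_const.
  by apply: leq_sum => col _; rewrite sum1_count leqNgt small.
have : 0 < #|C| by apply/card_gt0P; exists c0.
lia.
Qed.

Definition end_hom_bound M := iter M (fun b => (#|C| * b).+1) 0.

Definition ramsey_bound n := end_hom_bound (#|C| * n).

Variable chi : nat -> nat -> C.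

Lemma end_homogeneous M (L : seq nat) : end_hom_bound M <= size L ->
  exists ys (kap : nat -> C), [/\ size ys = M, subseq ys L &
    forall a b, a < b < M -> chi (nth 0 ys a) (nth 0 ys b) = kap a].
Proof.
elim: M L => [|M IH] L le_L.
  by exists [::], (fun _ => chi 0 0); split=> [||a b]; rewrite ?sub0seq ?ltn0 ?andbF.
case: L le_L => [//|x L]; rewrite /= ltnS => le_L.
have [col le_col] := pigeonhole (chi x x) (chi x) le_L.
have /IH[ys [kap [size_ys sub_ys hom_ys]]] :
    end_hom_bound M <= size [seq y <- L | chi x y == col] by rewrite size_filter.
exists (x :: ys), (fun a => if a is a'.+1 then kap a' else col); split.
- by rewrite /= size_ys.
- by rewrite /= eqxx; apply: subseq_trans sub_ys (filter_subseq _ _).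
case=> [|a] [|b] //=; rewrite !ltnS => lt_bM.
  have : nth 0 ys b \in ys by rewrite mem_nth // size_ys.
  by move/(mem_subseq sub_ys); rewrite mem_filter => /andP[/eqP].
exact: hom_ys.
Qed.

Lemma ramsey_pairs n : exists (S : nat -> nat) (col : C),
  [/\ {in gtn n, forall p, S p < ramsey_bound n},
      {in gtn n &, {homo S : p q / p < q}} &
      {in gtn n &, forall p q, p < q -> chi (S p) (S q) = col}].
Proof.
set M := #|C| * n; set B := end_hom_bound M.
have /end_homogeneous[ys [kap [size_ys sub_ys hom_ys]]] : B <= size (iota 0 B).
  by rewrite size_iota.
have /(pigeonhole (chi 0 0) kap)[col le_n] : #|C| * n <= size (iota 0 M).
  by rewrite size_iota.
set I := [seq a <- iota 0 M | kap a == col].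
have size_I : n <= size I by rewrite size_filter.
have sorted_I : sorted ltn I.
  by apply: (sorted_filter ltn_trans); apply: iota_ltn_sorted.
have sorted_ys : sorted ltn ys.
  exact: (subseq_sorted ltn_trans sub_ys (iota_ltn_sorted 0 B)).
have lt_I p : p < n -> p < size I by move=> lt_pn; apply: leq_trans lt_pn size_I.
have I_good p : p < n -> (kap (nth 0 I p) == col) && (nth 0 I p < M).
  by move=> lt_pn; have := mem_nth 0 (lt_I _ lt_pn); rewrite mem_filter mem_iota.
have I_lt : {in gtn n &, {homo nth 0 I : p q / p < q}}.
  by move=> p q p_n q_n; apply: (sorted_ltn_nth ltn_trans); rewrite ?inE ?lt_I.
have lt_ys a : a < M -> a < size ys by rewrite size_ys.
exists (fun p => nth 0 ys (nth 0 I p)), col; split.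
- move=> p /I_good/andP[_ /lt_ys/(mem_nth 0)/(mem_subseq sub_ys)].
  by rewrite mem_iota.
- move=> p q p_n q_n lt_pq.
  have [/andP[_ Ip_M] /andP[_ Iq_M]] := (I_good p p_n, I_good q q_n).
  by apply: (sorted_ltn_nth ltn_trans); rewrite ?inE ?lt_ys ?I_lt.
move=> p q p_n q_n lt_pq.
have [/andP[/eqP Ip_col _] /andP[_ Iq_M]] := (I_good p p_n, I_good q q_n).
by rewrite hom_ys ?I_lt ?Iq_M.
Qed.

End Ramsey.

Definition Hinf_adj (u v : nat * nat) : bool :=
  (u.1 != v.1) && (matched_pair u.1 v.1 ==> (u.2 == v.2)).

Definition in_box n (v : nat * nat) : bool := (v.1 < 5) && (v.2 < n).

Definition scale G (v : nat * nat) : nat * nat := (v.1, v.2.+1 * G.+1).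

Fixpoint zigzag (i h a d s : nat) : seq (nat * nat) :=
  if s is s'.+1 then (h, d) :: (i, a) :: zigzag i h a.+1 d.+1 s' else [::].

Lemma matched_pairC : commutative matched_pair.
Proof. by move=> i j; rewrite /matched_pair minnC maxnC. Qed.

Lemma scale_inj G : injective (scale G).
Proof.
by apply: (can_inj (g := fun v => (v.1, (v.2 %/ G.+1).-1))) => -[i x]; rewrite /= mulnK.
Qed.

Lemma scale_in_box G v : in_box 3 v -> in_box (3 * G.+1).+1 (scale G v).
Proof. by case/andP=> lt_v1 lt_v2; rewrite /in_box lt_v1 ltnS leq_mul. Qed.

Lemma size_zigzag i h a d s : size (zigzag i h a d s) = s.*2.
Proof. by elim: s a d => //= s IH a d; rewrite IH. Qed.

Lemma mem_zigzag i h a d s v : v \in zigzag i h a d s ->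
  exists2 q, q < s & v = (i, a + q) \/ v = (h, d + q).
Proof.
elim: s a d => //= s IH a d; rewrite !inE => /or3P[/eqP-> | /eqP-> | /IH[q lt_qs E]].
- by exists 0; last by right; rewrite addn0.
- by exists 0; last by left; rewrite addn0.
by exists q.+1; rewrite // -!addSnnS.
Qed.

Lemma zigzag_uniq i h a d s : i != h -> uniq (zigzag i h a d s).
Proof.
move=> neq_ih; elim: s a d => //= s IH a d; rewrite IH inE andbT negb_or.
have neq_hi : h != i by rewrite eq_sym.
rewrite xpair_eqE (negbTE neq_hi) /=.
by apply/andP; split; apply/negP => /mem_zigzag[q _ [] []]; lia.
Qed.

Section Canonical.
Variables (F X : 'I_5 -> 'I_5 -> bool).

Definition canon_col (u v : nat * nat) : bool :=
  if u.2 == v.2 then X (inord u.1) (inord v.1)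
  else if u.2 < v.2 then F (inord u.1) (inord v.1) else F (inord v.1) (inord u.1).

Definition canon_edge b u v := Hinf_adj u v && (canon_col u v == b).

Definition cross_edge b i h :=
  [&& i != h, ~~ matched_pair i h & F (inord i) (inord h) == b].

Lemma canon_edge_up b i h x y :
  x < y -> canon_edge b (i, x) (h, y) = cross_edge b i h.
Proof.
move=> lt_xy; rewrite /canon_edge /Hinf_adj /canon_col /= lt_xy (ltn_eqF lt_xy).
by rewrite implybF -andbA.
Qed.

Lemma canon_edge_down b i h x y :
  x < y -> canon_edge b (h, y) (i, x) = cross_edge b i h.
Proof.
move=> lt_xy; rewrite /canon_edge /Hinf_adj /canon_col /=.
rewrite (gtn_eqF lt_xy) ltnNge (ltnW lt_xy).
by rewrite implybF -andbA eq_sym matched_pairC.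
Qed.

Lemma canon_edge_scale b G : {mono scale G : u v / canon_edge b u v}.
Proof.
move=> [i x] [j y]; rewrite /canon_edge /Hinf_adj /canon_col /=.
by rewrite eqn_pmul2r // ltn_pmul2r // eqSS ltnS.
Qed.

Lemma zigzag_path b i h a d s x y :
  cross_edge b i h -> x < y -> x < d -> a + s <= d -> a + s <= y ->
  path (canon_edge b) (i, x) (rcons (zigzag i h a d s) (h, y)).
Proof.
move=> cross_ih; elim: s a d x => [|s IH] a d x lt_xy lt_xd le_d le_y /=.
  by rewrite canon_edge_up // cross_ih.
rewrite canon_edge_up // canon_edge_down ?cross_ih ?IH //=; lia.
Qed.

Definition pattern (p : seq (nat * nat)) : bool :=
  [&& uniq p, all (in_box 3) p, cycle Hinf_adj p & (last (0, 0) p).2 < (head (0, 0) p).2].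

Lemma pattern_extend b G s p :
  pattern p -> cycle (fun u v => canon_col u v == b) p -> s.*2 <= G ->
  exists2 q, [/\ uniq q, size q = size p + s.*2 & all (in_box (3 * G.+1).+1) q] &
    cycle (canon_edge b) q.
Proof.
case: p => [|[h rb] p] /and4P[Up Bp Ap] //=.
case last_p: (last (h, rb) p) => [i ra] /= lt_rab Cp le_sG.
have : cycle (canon_edge b) ((h, rb) :: p) by rewrite cycle_relI Ap.
rewrite /= rcons_path last_p canon_edge_up // => /andP[Ep cross_ih].
have /andP[/andP[lt_h5 lt_rb3] _] := Bp.
have /andP[lt_i5 _] : in_box 3 (i, ra) by rewrite -last_p (allP Bp) // mem_last.
set a := (rb * G.+1).+1; set Z := zigzag i h a (a + s) s.
have Z_pos v : v \in Z -> [/\ v.1 < 5, rb * G.+1 < v.2 & v.2 < rb.+1 * G.+1].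
  by case/mem_zigzag => q lt_qs [] ->; rewrite /= mulSnr; split=> //; lia.
exists (map (scale G) ((h, rb) :: p) ++ Z); first split.
- rewrite cat_uniq map_inj_uniq ?zigzag_uniq ?Up ?andbT; last exact: scale_inj.
  - apply/hasPn => v /Z_pos[_ lo hi]; apply/mapP => -[[j t] _ v_t].
    by move: lo hi; rewrite v_t /= !ltn_pmul2r //; lia.
  by case/and3P: cross_ih.
- by rewrite size_cat size_map size_zigzag.
- rewrite all_cat all_map; apply/andP; split.
    by apply: sub_all Bp => v; apply: scale_in_box.
  apply/allP => v /Z_pos[lt_v5 _ hi]; rewrite /in_box lt_v5 ltnS ltnW //.
  by apply: leq_trans hi _; rewrite leq_mul.
rewrite /= rcons_cat cat_path (mono_path (canon_edge_scale b G)) Ep last_map last_p.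
have le_rab := leq_mul lt_rab (leqnn G.+1).
apply: zigzag_path; rewrite //= ?ltn_pmul2r // /a; first lia.
by rewrite mulSnr; lia.
Qed.

End Canonical.

Definition lit := (nat * bool)%type.

Fixpoint lookup (a : seq lit) (x : nat) : option bool :=
  if a is l :: a' then if x == l.1 then Some l.2 else lookup a' x else None.

Definition lit_sat (a : seq lit) (l : lit) := lookup a l.1 == Some l.2.

Definition lit_consistent (a : seq lit) (l : lit) := lookup a l.1 != Some (~~ l.2).

(* Only the size of the search depends on this choice, not the soundness of [dnf_taut]. *)
Fixpoint branch_var (a : seq lit) (cs : seq (seq lit)) (best : option (nat * nat)) :=
  match cs with
  | [::] => omap snd best
  | cl :: cs' =>
    if [seq l <- cl | lookup a l.1 == None] is l :: _ as u then
      let cand := Some (size u, l.1) in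
      branch_var a cs' (if best is Some (sz, _) then if size u < sz then cand else best
                        else cand)
    else branch_var a cs' best
  end.

Fixpoint dnf_taut (fuel : nat) (a : seq lit) (cs : seq (seq lit)) : bool :=
  let cs' := [seq cl <- cs | all (lit_consistent a) cl] in
  if has (all (lit_sat a)) cs' then true else
  if fuel is f.+1 then
    if branch_var a cs' None is Some x then
      dnf_taut f ((x, true) :: a) cs' && dnf_taut f ((x, false) :: a) cs'
    else false
  else false.

Lemma dnf_tautP fuel a cs (val : nat -> bool) :
  dnf_taut fuel a cs -> (forall x v, lookup a x = Some v -> val x = v) ->
  exists2 cl, cl \in cs & all (fun l => val l.1 == l.2) cl.
Proof.
have sat_val a' cl : (forall x v, lookup a' x = Some v -> val x = v) ->
    all (lit_sat a') cl -> all (fun l => val l.1 == l.2) cl.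
  by move=> val_a /allP sat_cl; apply/allP => l /sat_cl /eqP /val_a ->.
elim: fuel a cs => [|f IH] a cs /= taut_a val_a;
  case: hasP taut_a => [[cl] | _ //]; try (rewrite mem_filter =>
  /andP[_ cl_cs] /(sat_val _ _ val_a) sat_cl _; by exists cl).
case: (branch_var _ _ _) => // x /andP[taut_t taut_f].
suff [cl] : exists2 cl, cl \in [seq cl <- cs | all (lit_consistent a) cl] &
    all (fun l => val l.1 == l.2) cl by rewrite mem_filter => /andP[_ cl_cs]; exists cl.
case val_x: (val x); [apply: IH taut_t _ | apply: IH taut_f _] => y v /=;
  by case: eqP => [-> [<-] | _ /val_a].
Qed.

Definition cycle_edges (T : Type) (s : seq T) : seq (T * T) :=
  if s is x :: s' then zip (x :: rcons s' x) (rcons s' x) else [::].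

Lemma cycle_edgesE (T : Type) (r : rel T) s :
  cycle r s = all (fun e => r e.1 e.2) (cycle_edges s).
Proof.
by case: s => //= x s; move: (rcons s x) => t; elim: t x => //= y t IH x; rewrite IH.
Qed.

(* Variable [5 * i + j] stands for [F i j], and [25 + 5 * i + j] for [X i j] with [i <= j]
   ([X] is symmetric). *)
Definition atom (u v : nat * nat) : nat :=
  if u.2 == v.2 then 25 + 5 * minn u.1 v.1 + maxn u.1 v.1
  else if u.2 < v.2 then 5 * u.1 + v.1 else 5 * v.1 + u.1.

Definition atom_val (F X : 'I_5 -> 'I_5 -> bool) (x : nat) : bool :=
  if x < 25 then F (inord (x %/ 5)) (inord (x %% 5))
  else X (inord ((x - 25) %/ 5)) (inord ((x - 25) %% 5)).

Lemma atom_valE F X u v : (forall i j, X i j = X j i) -> u.1 < 5 -> v.1 < 5 ->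
  atom_val F X (atom u v) = canon_col F X u v.
Proof.
have divmod5 i j : j < 5 -> ((5 * i + j) %/ 5 = i) * ((5 * i + j) %% 5 = j) by split; lia.
case: u v => [i x] [j y] X_sym /= lt_i5 lt_j5; rewrite /atom /atom_val /canon_col /=.
case: eqP => _.
  have lt_max : maxn i j < 5 by rewrite gtn_max lt_i5.
  rewrite -addnA ltnNge leq_addr addKn /= !divmod5 //.
  by case: leqP; rewrite // X_sym.
by case: (ltnP x y) => _; rewrite ifT ?divmod5 //; lia.
Qed.

Definition pattern_lits (pb : bool * seq (nat * nat)) : seq lit :=
  [seq (atom e.1 e.2, pb.1) | e <- cycle_edges pb.2].

(* [(b, p)]: the walk [p] of (part, level) vertices, monochromatic of colour [b] ([true] is
   red) when its clause holds. *)
Definition patterns : seq (bool * seq (nat * nat)) := [::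
  (true, [:: (2,1); (0,0); (1,0)]);
  (false, [:: (2,1); (0,0); (1,0)]);
  (true, [:: (3,1); (0,0); (1,0)]);
  (false, [:: (3,1); (0,0); (1,0)]);
  (true, [:: (4,1); (0,0); (1,0)]);
  (false, [:: (4,1); (0,0); (1,0)]);
  (true, [:: (4,1); (0,0); (2,0)]);
  (false, [:: (4,1); (0,0); (2,0)]);
  (true, [:: (2,1); (3,1); (0,0)]);
  (false, [:: (2,1); (3,1); (0,0)]);
  (true, [:: (2,1); (4,0); (0,0)]);
  (false, [:: (2,1); (4,0); (0,0)]);
  (true, [:: (2,1); (4,1); (0,0)]);
  (false, [:: (2,1); (4,1); (0,0)]);
  (true, [:: (2,1); (4,2); (0,0)]);
  (false, [:: (2,1); (4,2); (0,0)]);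
  (true, [:: (2,2); (4,1); (0,0)]);
  (false, [:: (2,2); (4,1); (0,0)]);
  (true, [:: (4,1); (0,0); (3,0)]);
  (true, [:: (3,1); (4,0); (0,0)]);
  (false, [:: (3,1); (4,0); (0,0)]);
  (true, [:: (3,1); (4,1); (0,0)]);
  (false, [:: (3,1); (4,1); (0,0)]);
  (true, [:: (3,1); (4,2); (0,0)]);
  (false, [:: (3,1); (4,2); (0,0)]);
  (true, [:: (3,2); (4,1); (0,0)]);
  (false, [:: (3,2); (4,1); (0,0)]);
  (false, [:: (1,1); (0,1); (2,0)]);
  (false, [:: (1,1); (0,1); (3,0)]);
  (false, [:: (0,1); (3,0); (2,0)]);
  (true, [:: (0,1); (4,2); (2,0)]);
  (false, [:: (0,1); (4,2); (2,0)]);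
  (true, [:: (2,2); (4,0); (0,1)]);
  (false, [:: (2,2); (4,0); (0,1)]);
  (true, [:: (0,1); (4,2); (3,0)]);
  (true, [:: (3,2); (4,0); (0,1)]);
  (true, [:: (4,1); (1,0); (2,0)]);
  (true, [:: (2,1); (3,1); (1,0)]);
  (false, [:: (2,1); (3,1); (1,0)]);
  (true, [:: (2,1); (4,0); (1,0)]);
  (false, [:: (2,1); (4,0); (1,0)]);
  (true, [:: (2,1); (4,1); (1,0)]);
  (false, [:: (2,1); (4,1); (1,0)]);
  (true, [:: (2,1); (4,2); (1,0)]);
  (false, [:: (2,1); (4,2); (1,0)]);
  (true, [:: (2,2); (4,1); (1,0)]);
  (false, [:: (2,2); (4,1); (1,0)]);
  (true, [:: (4,1); (1,0); (3,0)]);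
  (true, [:: (3,1); (4,0); (1,0)]);
  (false, [:: (3,1); (4,0); (1,0)]);
  (true, [:: (3,1); (4,1); (1,0)]);
  (false, [:: (3,1); (4,1); (1,0)]);
  (false, [:: (3,1); (4,2); (1,0)]);
  (false, [:: (3,2); (4,1); (1,0)]);
  (true, [:: (2,2); (4,0); (1,1)]);
  (true, [:: (3,2); (4,0); (1,1)]);
  (true, [:: (4,1); (2,0); (3,0)]);
  (false, [:: (4,1); (2,0); (3,0)]);
  (false, [:: (2,1); (1,1); (0,1); (2,2); (0,0)]);
  (false, [:: (2,1); (3,1); (0,1); (2,2); (0,0)]);
  (false, [:: (3,1); (1,1); (0,1); (3,2); (0,0)]);
  (false, [:: (3,1); (2,1); (0,1); (3,2); (0,0)]);
  (false, [:: (2,2); (1,0); (2,1); (0,1); (1,1)]);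
  (false, [:: (2,1); (3,1); (1,1); (2,2); (1,0)]);
  (false, [:: (4,1); (3,1); (2,1); (4,2); (2,0)]);
  (false, [:: (2,1); (3,1); (4,2); (0,0); (1,0)]);
  (false, [:: (2,1); (4,0); (3,1); (0,0); (1,0)]);
  (false, [:: (4,1); (0,0); (1,0); (3,0); (2,0)]);
  (false, [:: (3,1); (4,0); (2,1); (0,0); (1,0)]);
  (false, [:: (4,1); (2,0); (3,0); (0,0); (1,0)]);
  (false, [:: (4,1); (3,0); (2,0); (0,0); (1,0)]);
  (false, [:: (2,1); (1,0); (3,1); (4,2); (0,0)]);
  (false, [:: (2,1); (1,0); (4,2); (3,1); (0,0)]);
  (false, [:: (2,1); (3,1); (1,0); (4,0); (0,0)]);
  (false, [:: (2,1); (4,2); (1,0); (3,1); (0,0)]);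
  (false, [:: (3,1); (1,0); (2,1); (4,2); (0,0)]);
  (false, [:: (3,1); (2,1); (1,0); (4,0); (0,0)])].

Lemma patterns_taut : dnf_taut 30 [::] (map pattern_lits patterns).
Proof. by vm_compute. Qed.

Lemma patterns_ok : all (fun pb => [&& pattern pb.2, odd (size pb.2) &
  size pb.2 <= if pb.1 then 3 else 5]) patterns.
Proof. by vm_compute. Qed.

Lemma canon_mono_pattern F X : (forall i j, X i j = X j i) ->
  exists2 pb, pb \in patterns & cycle (fun u v => canon_col F X u v == pb.1) pb.2.
Proof.
move=> X_sym; have val_nil x v : lookup [::] x = Some v -> atom_val F X x = v by [].
have [_ /mapP[pb pb_in ->] sat_pb] := dnf_tautP patterns_taut val_nil.
have /and3P[/and4P[_ B_pb _ _] _ _] := allP patterns_ok _ pb_in.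
have eq_val : {in in_box 3 &, (fun u v => atom_val F X (atom u v) == pb.1) =2
                             (fun u v => canon_col F X u v == pb.1)}.
  by move=> u v /andP[lt_u5 _] /andP[lt_v5 _]; rewrite atom_valE.
exists pb; rewrite // -(eq_in_cycle eq_val B_pb) cycle_edgesE.
by move: sat_pb; rewrite all_map.
Qed.

Definition embed m (S : nat -> 'I_m) (v : nat * nat) : 'I_5 * 'I_m := (inord v.1, S v.2).

Section Embedding.
Variables (m n : nat) (c : 'I_5 * 'I_m -> 'I_5 * 'I_m -> bool) (S : nat -> 'I_m).
Variables (F X : 'I_5 -> 'I_5 -> bool).
Hypothesis S_inj : {in gtn n &, injective S}.
Hypothesis c_canon : forall u v, in_box n u -> in_box n v ->
  c (embed S u) (embed S v) = canon_col F X u v.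

Lemma embed_inj : {in in_box n &, injective (embed S)}.
Proof.
move=> [i x] [j y] /andP[/= lt_i5 lt_xn] /andP[/= lt_j5 lt_yn] [/(congr1 val)].
by rewrite /= !inordK // => -> /S_inj->.
Qed.

Lemma Hm_adj_embed : {in in_box n &, forall u v,
  Hm_adj (embed S u) (embed S v) = Hinf_adj u v}.
Proof.
move=> [i x] [j y] /andP[/= lt_i5 lt_xn] /andP[/= lt_j5 lt_yn].
rewrite /Hm_adj /Hinf_adj /= -val_eqE /= !inordK //.
case: eqP => //= _; case: matched_pair => //=.
by apply/eqP/eqP => [/S_inj-> | ->].
Qed.

Lemma has_cycle_embed b q : uniq q -> all (in_box n) q -> cycle (canon_edge F X b) q ->
  has_cycle (fun x y => Hm_adj x y && (c x y == b)) (size q).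
Proof.
move=> Uq Bq Cq; rewrite -(size_map (embed S)); apply: has_cycle_seq.
  rewrite map_inj_in_uniq // => u v /(allP Bq) u_in /(allP Bq) v_in.
  exact: embed_inj.
apply: homo_cycle_in Bq Cq => u v u_in v_in.
by rewrite /canon_edge Hm_adj_embed ?c_canon.
Qed.

End Embedding.

(* The colour of a pair of columns [x < y]: the colours of the edges from column [x] to
   column [y], and of the edges inside column [x]. *)
Local Notation profile := ({ffun 'I_5 * 'I_5 -> bool} * {ffun 'I_5 * 'I_5 -> bool})%type.

Lemma canonical_embedding m n (c : 'I_5 * 'I_m.+1 -> 'I_5 * 'I_m.+1 -> bool) :
  (forall x y, c x y = c y x) -> ramsey_bound profile n.+1 <= m.+1 -> 0 < n ->
  exists S F X, [/\ {in gtn n &, injective S}, forall i j, X i j = X j i &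
    forall u v, in_box n u -> in_box n v -> c (embed S u) (embed S v) = canon_col F X u v].
Proof.
move=> c_sym le_m n_gt0.
pose chi x y : profile := ([ffun ij => c (ij.1, inord x) (ij.2, inord y)],
                           [ffun ij => c (ij.1, inord x) (ij.2, inord x)]).
have [S0 [col [S0_lt S0_homo S0_col]]] := ramsey_pairs chi n.+1.
have S0_m p : p <= n -> S0 p < m.+1 by move=> le_pn; apply: leq_trans (S0_lt p _) le_m.
have S0_inj : {in gtn n.+1 &, injective S0} by apply/incn_inj_in/leq_mono_in.
pose F i j := col.1 (i, j); pose X i j := col.2 (i, j).
have F_E i j x y : x < y -> y < n -> c (i, inord (S0 x)) (j, inord (S0 y)) = F i j.
  move=> lt_xy lt_yn; have lt_xn := ltn_trans lt_xy lt_yn.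
  by rewrite /F -(S0_col x y (ltnW lt_xn) (ltnW lt_yn) lt_xy) ffunE.
have X_E i j x : x < n -> c (i, inord (S0 x)) (j, inord (S0 x)) = X i j.
  by move=> lt_xn; rewrite /X -(S0_col x n (ltnW lt_xn) (ltnSn n) lt_xn) ffunE.
exists (fun p => inord (S0 p)), F, X; split.
- move=> x y lt_xn lt_yn /(congr1 val) /=.
  rewrite !inordK ?S0_m ?(ltnW lt_xn) ?(ltnW lt_yn) // => /S0_inj.
  by apply; apply: ltnW.
- by move=> i j; rewrite -!(X_E _ _ 0) // c_sym.
move=> [i x] [j y] /andP[/= lt_i5 lt_xn] /andP[/= lt_j5 lt_yn].
rewrite /embed /canon_col /=; case: ltngtP => [lt_xy|lt_yx|<-].
- exact: F_E.
- by rewrite c_sym F_E.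
exact: X_E.
Qed.

Theorem lemma3p3 (k l : nat) :
  3 <= k -> odd k -> 5 <= l -> odd l ->
  exists m0 : nat, forall m : nat, m0 <= m -> cycle_ramsey (@Hm_adj m) k l.
Proof.
move=> k3 k_odd l5 l_odd.
pose G := k + l; pose n := (3 * G.+1).+1.
exists (ramsey_bound profile n.+1).+1 => -[//|m] le_m c c_sym.
have [S [F [X [S_inj X_sym c_canon]]]] := canonical_embedding c_sym (ltnW le_m) isT.
have [[b p] pb_in /= Cp] := canon_mono_pattern F X_sym.
have /and3P[pat_p odd_p le_p] := allP patterns_ok _ pb_in.
have [le_pt odd_t] : size p <= (if b then k else l) /\ odd (if b then k else l).
  by case: (b) le_p => /= le_p; split=> //; lia.
pose s := ((if b then k else l) - size p)./2.
have size_s : size p + s.*2 = if b then k else l.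
  by rewrite halfK oddB // odd_t odd_p subn0 subnKC.
have le_sG : s.*2 <= G.
  rewrite (leq_trans (leq_addl (size p) _)) // size_s /G.
  by case: (b); rewrite ?leq_addr ?leq_addl.
have [q [Uq size_q Bq] Cq] := pattern_extend pat_p Cp le_sG.
have := has_cycle_embed S_inj c_canon Uq Bq Cq; rewrite size_q size_s.
by case: (b) => cyc; [left | right]; apply: (eq_has_cycle _ cyc) => x y;
  rewrite ?eqb_id ?eqbF_neg.
Qed.
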